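(* Let $\mathcal{X}\subseteq\mathbb{R}^d$ be nonempty, closed and convex, and let $f=\frac1n\sum_{i=1}^nf_i$ with each $f_i:\mathbb{R}^d\to\mathbb{R}$ differentiable; assume $\operatorname{arg\,min}_{x\in\mathcal{X}}f(x)$ is nonempty and that each $f_i$ has a constrained minimizer $x_{\star,i}\in\operatorname{arg\,min}_{x\in\mathcal{X}}f_i(x)$. Let $x_k\in\mathcal{X}$, let $i_k\in\{1,\dots,n\}$ be a given (realized) index and $g_{i_k}:=\nabla f_{i_k}(x_k)$. Assume $g_{i_k}\ne0$ and $0<t_k\le\frac{\langle g_{i_k},x_k-x_{\star,i_k}\rangle}{\|g_{i_k}\|}$, and let $x_{k+1}\in\operatorname{arg\,min}_{z\in\mathcal{X}\cap\mathcal{B}(x_k,t_k)}\langle g_{i_k},z\rangle$. Then $t_k\le\|x_k-x_{\star,i_k}\|$, $\|x_{k+1}-x_k\|=t_k$, and $\|x_{k+1}-x_{\star,i_k}\|^2\le\|x_k-x_{\star,i_k}\|^2-t_k^2$.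
   Context: $\|\cdot\|$ is the Euclidean norm, $\mathcal{B}(x,t):=\{y:\|y-x\|\le t\}$. *)

From HB Require Import structures.
From mathcomp Require Import all_boot all_order all_algebra.
From mathcomp Require Import all_classical all_reals all_analysis.
Set Implicit Arguments. Unset Strict Implicit. Unset Printing Implicit Defensive.
Import Order.TTheory GRing.Theory Num.Theory.
Import numFieldNormedType.Exports.
Local Open Scope classical_set_scope.
Local Open Scope ring_scope.

Definition dotv {R : realType} {d : nat} (u v : 'rV[R]_d) : R :=
  \sum_(i < d) u ord0 i * v ord0 i.
Definition enorm {R : realType} {d : nat} (u : 'rV[R]_d) : R :=
  Num.sqrt (dotv u u).

Definition eball {R : realType} {d : nat} (x : 'rV[R]_d) (t : R) : set 'rV[R]_d :=
  [set y | enorm (y - x) <= t].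

Definition is_argmin {R : realType} {d : nat} (X : set 'rV[R]_d)
  (h : 'rV[R]_d -> R) (z : 'rV[R]_d) : Prop :=
  X z /\ forall y, X y -> h z <= h y.

Definition is_gradient {R : realType} {d : nat} (h : 'rV[R]_d -> R)
  (x g : 'rV[R]_d) : Prop :=
  differentiable h x /\ forall v, 'd h x v = dotv g v.

(* Write x = x_k, t = t_k, x* = x_{*,i_k} and let z be the new iterate.  By
   Cauchy-Schwarz the step-size condition gives
     <g, x*> + (t - ||y - x||) ||g|| <= <g, y>   for every y,
   so x* lies below the whole ball B(x, t) and strictly below its interior.
   If z were interior, moving from z a little towards any better point of X
   would stay in X and in the ball, so z would minimise <g, .> over all of X,
   which x* forbids; hence ||z - x|| = t.  If <z - x, x* - z> < 0, a short
   step from z towards x* enters the open ball without increasing <g, .>,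
   giving an interior minimiser; hence <z - x, x* - x> >= t^2, which is the
   last inequality once ||z - x*||^2 = ||(z - x) - (x* - x)||^2 is expanded. *)

From HB Require Import structures.
From mathcomp Require Import all_boot all_order all_algebra.
From mathcomp Require Import all_classical all_reals all_analysis.
From mathcomp Require Import ring lra.
Import Order.TTheory GRing.Theory Num.Theory.
Import numFieldNormedType.Exports.
Local Open Scope classical_set_scope.
Local Open Scope ring_scope.

Section small_steps.
Context {R : realFieldType}.

Lemma exists_small_step (m c : R) :
  0 < c -> exists2 s, 0 < s <= 1 & s * m < c.
Proof.
move=> c_gt0; set s := Num.min 1 (c / (`|m| + 1)).
have m1_gt0 : 0 < `|m| + 1 by rewrite ltr_wpDl.
have s_gt0 : 0 < s by rewrite lt_min ltr01 divr_gt0.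
exists s; first by rewrite s_gt0 ge_min lexx.
have s_le : s * (`|m| + 1) <= c.
  by rewrite -ler_pdivlMr // ge_min lexx orbT.
have : s * m <= s * `|m| by rewrite ler_pM2l // ler_norm.
nra.
Qed.

Lemma exists_small_quadratic (a b c : R) :
  0 < c -> exists2 s, 0 < s <= 1 & 2 * s * a + s ^+ 2 * b < c.
Proof.
move=> /(exists_small_step (2 * `|a| + `|b|)) [s /andP[s_gt0 s_le1] small].
exists s; first by rewrite s_gt0.
have sa : s * a <= s * `|a| by rewrite ler_pM2l // ler_norm.
have sb : s ^+ 2 * b <= s * `|b|.
  have : s * b <= `|b|.
    by apply: le_trans (ler_norm _) _; rewrite normrM gtr0_norm // ler_piMl.
  by rewrite expr2 -mulrA ler_pM2l.
nra.
Qed.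

Lemma exists_small_quadratic_neg (a b : R) :
  a < 0 -> exists2 s, 0 < s <= 1 & 2 * s * a + s ^+ 2 * b < 0.
Proof.
move=> a_lt0.
have /(exists_small_step b) [s /andP[s_gt0 s_le1] small] : 0 < - a.
  by rewrite oppr_gt0.
exists s; first by rewrite s_gt0.
have -> : 2 * s * a + s ^+ 2 * b = s * (2 * a + s * b) by ring.
by rewrite pmulr_rlt0 //; lra.
Qed.

End small_steps.

Lemma convex_segment {R : numDomainType} {M : lmodType R} {A : set M} {z p : M}
    (s : R) :
  convex_set A -> A z -> A p -> 0 <= s <= 1 -> A (z + s *: (p - z)).
Proof.
move=> convA Az Ap /andP[s_ge0 s_le1].
have -> : z + s *: (p - z) = s *: p + (1 - s) *: z.
  by rewrite scalerBr scalerBl scale1r addrCA addrC.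
by have := convA p z (Itv01 s_ge0 s_le1); rewrite !inE; apply.
Qed.

Section euclidean.
Context {R : realType} {d : nat}.
Implicit Types (u v w : 'rV[R]_d).

Lemma dotvC u v : dotv u v = dotv v u.
Proof. by apply: eq_bigr => i _; rewrite mulrC. Qed.

Lemma dotvDl u v w : dotv (u + v) w = dotv u w + dotv v w.
Proof.
by rewrite /dotv -big_split; apply: eq_bigr => i _; rewrite mxE mulrDl.
Qed.

Lemma dotvZl (a : R) u v : dotv (a *: u) v = a * dotv u v.
Proof.
by rewrite /dotv mulr_sumr; apply: eq_bigr => i _; rewrite mxE mulrA.
Qed.

Lemma dotvNl u v : dotv (- u) v = - dotv u v.
Proof. by rewrite -scaleN1r dotvZl mulN1r. Qed.

Lemma dotvBl u v w : dotv (u - v) w = dotv u w - dotv v w.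
Proof. by rewrite dotvDl dotvNl. Qed.

Lemma dotvDr u v w : dotv u (v + w) = dotv u v + dotv u w.
Proof. by rewrite dotvC dotvDl !(dotvC u). Qed.

Lemma dotvZr (a : R) u v : dotv u (a *: v) = a * dotv u v.
Proof. by rewrite dotvC dotvZl dotvC. Qed.

Lemma dotvBr u v w : dotv u (v - w) = dotv u v - dotv u w.
Proof. by rewrite dotvC dotvBl !(dotvC u). Qed.

Lemma dotvv_ge0 u : 0 <= dotv u u.
Proof. by apply: sumr_ge0 => i _; rewrite -expr2 sqr_ge0. Qed.

Lemma dotvv_eq0 u : (dotv u u == 0) = (u == 0).
Proof.
apply/idP/eqP => [|->]; last by rewrite /dotv big1 // => i _; rewrite mxE mul0r.
rewrite psumr_eq0 => [/allP u0|i _]; last by rewrite -expr2 sqr_ge0.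
apply/rowP => j; rewrite mxE.
by have /(_ (mem_index_enum _)) := u0 j; rewrite -expr2 sqrf_eq0 => /eqP.
Qed.

Lemma enorm_ge0 u : 0 <= enorm u.
Proof. exact: sqrtr_ge0. Qed.

Lemma enorm_sqr u : enorm u ^+ 2 = dotv u u.
Proof. exact/sqr_sqrtr/dotvv_ge0. Qed.

Lemma enorm_eq0 u : (enorm u == 0) = (u == 0).
Proof. by rewrite -sqrf_eq0 enorm_sqr dotvv_eq0. Qed.

Lemma enorm_gt0 u : (0 < enorm u) = (u != 0).
Proof. by rewrite lt_def enorm_eq0 enorm_ge0 andbT. Qed.

Lemma enorm_sqrD u v :
  enorm (u + v) ^+ 2 = enorm u ^+ 2 + 2 * dotv u v + enorm v ^+ 2.
Proof. by rewrite !enorm_sqr dotvDl !dotvDr (dotvC v u); ring. Qed.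

Lemma enorm_sqrB u v :
  enorm (u - v) ^+ 2 = enorm u ^+ 2 - 2 * dotv u v + enorm v ^+ 2.
Proof. by rewrite !enorm_sqr dotvBl !dotvBr (dotvC v u); ring. Qed.

Lemma enorm_sqrZ (a : R) u : enorm (a *: u) ^+ 2 = a ^+ 2 * enorm u ^+ 2.
Proof. by rewrite !enorm_sqr dotvZl dotvZr mulrA -expr2. Qed.

Lemma enormBC u v : enorm (u - v) = enorm (v - u).
Proof. by rewrite -opprB /enorm dotvNl dotvC dotvNl opprK. Qed.

Lemma enorm_le u (t : R) : 0 <= t -> (enorm u <= t) = (enorm u ^+ 2 <= t ^+ 2).
Proof. by move=> t_ge0; rewrite ler_sqr // nnegrE enorm_ge0. Qed.

Lemma enorm_lt u (t : R) : 0 <= t -> (enorm u < t) = (enorm u ^+ 2 < t ^+ 2).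
Proof. by move=> t_ge0; rewrite ltr_sqr // nnegrE enorm_ge0. Qed.

Lemma dotv_le_enorm u v : dotv u v <= enorm u * enorm v.
Proof.
have [uv0|uv_gt0] := eqVneq (enorm u * enorm v) 0.
  move/eqP: uv0; rewrite mulf_eq0 !enorm_eq0 => /orP[/eqP->|/eqP->].
    by rewrite -(scale0r 0) dotvZl mul0r mulr_ge0 ?enorm_ge0.
  by rewrite -(scale0r 0) dotvZr mul0r mulr_ge0 ?enorm_ge0.
(* ||(|v|) u - (|u|) v||^2 = 2 |u| |v| (|u| |v| - <u, v>) *)
have := enorm_ge0 (enorm v *: u - enorm u *: v).
rewrite -(ler_pXn2r (_ : 0 < 2)%N) ?nnegrE ?enorm_ge0 // expr0n /=.
rewrite enorm_sqrB !enorm_sqrZ dotvZl dotvZr.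
have : 0 < enorm u * enorm v by rewrite lt_def uv_gt0 mulr_ge0 ?enorm_ge0.
nra.
Qed.

End euclidean.

Section linear_argmin_on_ball.
Context {R : realType} {d : nat}.
Context {X : set 'rV[R]_d} {g x : 'rV[R]_d} {t : R}.
Hypothesis convX : convex_set X.

Lemma enorm_segment_sqr z p (s : R) :
  enorm (z + s *: (p - z) - x) ^+ 2 =
  enorm (z - x) ^+ 2 + 2 * s * dotv (z - x) (p - z)
  + s ^+ 2 * enorm (p - z) ^+ 2.
Proof. by rewrite addrAC enorm_sqrD dotvZr enorm_sqrZ mulrA. Qed.

Lemma dotv_segment z p (s : R) :
  dotv g (z + s *: (p - z)) = dotv g z + s * (dotv g p - dotv g z).
Proof. by rewrite dotvDr dotvZr dotvBr. Qed.

Lemma argmin_ball_interior z :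
  is_argmin (X `&` eball x t) (dotv g) z -> enorm (z - x) < t ->
  is_argmin X (dotv g) z.
Proof.
move=> [[Xz _] zmin] zx_lt; split => // p Xp; rewrite leNgt; apply/negP => gp.
have t_ge0 : 0 <= t by apply/ltW/(le_lt_trans (enorm_ge0 _) zx_lt).
have /(exists_small_quadratic (dotv (z - x) (p - z)) (enorm (p - z) ^+ 2))
    [s /andP[s_gt0 s_le1] small] : 0 < t ^+ 2 - enorm (z - x) ^+ 2.
  by rewrite subr_gt0 -enorm_lt.
have Xy : X (z + s *: (p - z)).
  by apply: (convex_segment s convX Xz Xp); rewrite ltW.
have By : eball x t (z + s *: (p - z)).
  by rewrite /eball /= enorm_le // enorm_segment_sqr; lra.
have := zmin _ (conj Xy By); rewrite dotv_segment; nra.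
Qed.

Context {xs : 'rV[R]_d}.
Hypotheses (Xxs : X xs) (g_neq0 : g != 0).
Hypothesis step_le : t * enorm g <= dotv g (x - xs).

Lemma dotv_ball_margin y :
  dotv g xs + (t - enorm (y - x)) * enorm g <= dotv g y.
Proof.
have := dotv_le_enorm g (x - y); rewrite enormBC !dotvBr.
move: step_le; rewrite dotvBr; lra.
Qed.

Lemma argmin_ball_on_sphere z :
  is_argmin (X `&` eball x t) (dotv g) z -> enorm (z - x) = t.
Proof.
move=> zmin; have [[_ Bz] _] := zmin.
apply/eqP; rewrite eq_le Bz /= leNgt; apply/negP => zx_lt.
have [_ /(_ xs Xxs) gz_le] := argmin_ball_interior _ zmin zx_lt.
have g_gt0 : 0 < enorm g by rewrite enorm_gt0.
have := dotv_ball_margin z; nra.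
Qed.

Lemma argmin_ball_descent z :
  is_argmin (X `&` eball x t) (dotv g) z -> t ^+ 2 <= dotv (z - x) (xs - x).
Proof.
move=> zmin; have [[Xz _] z_le] := zmin.
have zx_eq := argmin_ball_on_sphere _ zmin.
have t_ge0 : 0 <= t by rewrite -zx_eq enorm_ge0.
rewrite leNgt; apply/negP => lt_t.
have /(exists_small_quadratic_neg _ (enorm (xs - z) ^+ 2))
    [s /andP[s_gt0 s_le1] small] : dotv (z - x) (xs - z) < 0.
  have -> : xs - z = (xs - x) - (z - x) by rewrite opprB addrA subrK.
  rewrite dotvBr -enorm_sqr zx_eq; lra.
have Xy : X (z + s *: (xs - z)).
  by apply: (convex_segment s convX Xz Xxs); rewrite ltW.
have yx_lt : enorm (z + s *: (xs - z) - x) < t.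
  by rewrite enorm_lt // enorm_segment_sqr zx_eq; lra.
have ymin : is_argmin (X `&` eball x t) (dotv g) (z + s *: (xs - z)).
  split=> [|q Bq]; first by split; last exact: ltW.
  apply: le_trans (z_le q Bq); rewrite dotv_segment.
  have := dotv_ball_margin z; rewrite zx_eq subrr mul0r addr0; nra.
by have := argmin_ball_on_sphere _ ymin; move/eqP; rewrite lt_eqF.
Qed.

End linear_argmin_on_ball.

Theorem theorem10 (R : realType) (d n : nat) (X : set 'rV[R]_d)
  (fs : 'I_n -> 'rV[R]_d -> R) (xstar : 'I_n -> 'rV[R]_d)
  (xk xk1 : 'rV[R]_d) (ik : 'I_n) (g : 'rV[R]_d) (tk : R) :
  X !=set0 -> closed X -> convex_set X ->
  (forall i x, differentiable (fs i) x) ->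
  (exists xs, is_argmin X (fun x => n%:R^-1 * \sum_(i < n) fs i x) xs) ->
  (forall i, is_argmin X (fs i) (xstar i)) ->
  X xk ->
  is_gradient (fs ik) xk g ->
  g != 0 ->
  0 < tk -> tk <= dotv g (xk - xstar ik) / enorm g ->
  is_argmin (X `&` eball xk tk) (fun z => dotv g z) xk1 ->
  [/\ tk <= enorm (xk - xstar ik),
      enorm (xk1 - xk) = tk &
      enorm (xk1 - xstar ik) ^+ 2 <= enorm (xk - xstar ik) ^+ 2 - tk ^+ 2].
Proof.
move=> _ _ convX _ _ xstar_min _ _ g_neq0 _ tk_le xk1_min.
have [Xxs _] := xstar_min ik.
have g_gt0 : 0 < enorm g by rewrite enorm_gt0.
have step_le : tk * enorm g <= dotv g (xk - xstar ik) by rewrite -ler_pdivlMr.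
have on_sphere := argmin_ball_on_sphere convX Xxs g_neq0 step_le _ xk1_min.
have descent := argmin_ball_descent convX Xxs g_neq0 step_le _ xk1_min.
split => //.
- rewrite -(ler_pM2r g_gt0); apply: le_trans step_le _.
  by rewrite mulrC dotv_le_enorm.
- have -> : xk1 - xstar ik = (xk1 - xk) - (xstar ik - xk).
    by rewrite opprB addrA subrK.
  by rewrite enorm_sqrB on_sphere (enormBC xk); lra.
Qed.
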